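(* Let $P$ be a positive opetope and let $P^{op}$ be the positive hypergraph obtained from $P$ by interchanging the values of $\gamma$ and $\delta$ on the faces of dimension $1$ (i.e. for $a\in P_1$, the codomain of $a$ in $P^{op}$ is the unique element of $\delta(a)$ and $\delta^{P^{op}}(a)=\{\gamma(a)\}$), leaving everything else unchanged. Then $P^{op}$ is a positive opetope.
   Context: A positive hypergraph $S$ consists of finite sets $S_k$ ($k\in\mathbb{N}$), only finitely many nonempty, functions $\gamma:S_{k+1}\to S_k$, and for each $k$ an assignment $\delta$ sending each $a\in S_{k+1}$ to a nonempty subset $\delta(a)\subseteq S_k$, with $\delta(a)$ a singleton for $a\in S_1$. A face is identified with its singleton; $\gamma(X)=\{\gamma(a):a\in X\}$, $\delta(X)=\bigcup_{a\in X}\delta(a)$. For $k>0$ the lower order $<^-$ on $S_k$ is the transitive closure of: $a\lhd b$ iff $\gamma(a)\in\delta(b)$. The upper order $<^+$ on $S_k$ is the transitive closure of: $a\lhd b$ iff there is $\alpha\in S_{k+1}$ with $a\in\delta(\alpha)$, $\gamma(\alpha)=b$; $a\perp^{\pm}b$ iff $a<^{\pm}b$ or $b<^{\pm}a$. A positive opetopic cardinal is a positive hypergraph with $S_0\ne\emptyset$ such that: globularity ($\gamma\gamma(a)=\gamma\delta(a)-\delta\delta(a)$, $\delta\gamma(a)=\delta\delta(a)-\gamma\delta(a)$ for $\dim a\ge2$); each $<^+$ is a strict order, linear on $S_0$; for $k>0$, $\perp^-\cap\perp^+=\emptyset$ on $S_k$; for $x\in S_{k-1}$, $\{a:\gamma(a)=x\}$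 and $\{a:x\in\delta(a)\}$ are linearly ordered by $<^+$. A positive opetope is a positive opetopic cardinal with $|P_m-\delta(P_{m+1})|\le1$ for all $m$. *)

From mathcomp Require Import all_boot.
Set Implicit Arguments. Unset Strict Implicit. Unset Printing Implicit Defensive.

(* A (candidate) positive hypergraph: all faces of all dimensions are the
   elements of one finite type T (so only finitely many S_k are nonempty),
   S_k = [set a | dim a == k].  gam and del are only meaningful on faces of
   positive dimension. *)
Record hypergraph (T : finType) := Hypergraph {
  hdim : T -> nat;
  hgam : T -> T;
  hdel : T -> {set T} }.

Section Defs.
Variable T : finType.
Variable S : hypergraph T.
Local Notation dim := (hdim S).
Local Notation gam := (hgam S).
Local Notation del := (hdel S).

Definition faces (k : nat) : {set T} := [set a | dim a == k].

Definition is_pos_hypergraph : Prop :=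
  forall a, 0 < dim a ->
    [/\ dim (gam a) = (dim a).-1,
        del a != set0,
        (forall b, b \in del a -> dim b = (dim a).-1) &
        (dim a = 1 -> #|del a| = 1)].

Definition gamS (X : {set T}) : {set T} := gam @: X.
Definition delS (X : {set T}) : {set T} := \bigcup_(a in X) del a.

Definition tclos (R : rel T) : rel T :=
  fun a b => [exists c, R a c && connect R c b].

Definition lower_rel : rel T :=
  fun a b => [&& 0 < dim a, dim a == dim b & gam a \in del b].
Definition lower_lt : rel T := tclos lower_rel.

Definition upper_rel : rel T :=
  fun a b => (dim a == dim b) &&
    [exists al, [&& dim al == (dim a).+1, a \in del al & gam al == b]].
Definition upper_lt : rel T := tclos upper_rel.

Definition lower_perp (a b : T) : bool := lower_lt a b || lower_lt b a.
Definition upper_perp (a b : T) : bool := upper_lt a b || upper_lt b a.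

Definition is_pos_opetopic_cardinal : Prop :=
  [/\ is_pos_hypergraph,
      (exists a, dim a = 0),
      (forall a, 2 <= dim a ->
         gamS [set gam a] = gamS (del a) :\: delS (del a) /\
         delS [set gam a] = delS (del a) :\: gamS (del a)),
      (* each <^+ is a strict order (transitive by construction) *)
      (forall a, ~~ upper_lt a a) &
      (forall a b, dim a = 0 -> dim b = 0 -> a != b -> upper_perp a b)] /\
      [/\
          (forall a b, 0 < dim a -> dim a = dim b ->
             ~~ (lower_perp a b && upper_perp a b)),
          (forall x a b, dim a = (dim x).+1 -> dim b = (dim x).+1 ->
             gam a = x -> gam b = x -> a != b -> upper_perp a b) &
          (forall x a b, dim a = (dim x).+1 -> dim b = (dim x).+1 ->
             x \in del a -> x \in del b -> a != b -> upper_perp a b)].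

Definition is_pos_opetope : Prop :=
  is_pos_opetopic_cardinal /\
  forall m, #|faces m :\: delS (faces m.+1)| <= 1.

End Defs.

(* P^op: interchange gamma and delta on faces of dimension 1. For a in P_1,
   the new codomain is the unique element of del a (picked from del a; the
   default is never used when del a is a singleton). *)
Definition hop (T : finType) (P : hypergraph T) : hypergraph T :=
  Hypergraph (hdim P)
    (fun a => if hdim P a == 1 then odflt (hgam P a) [pick x in hdel P a]
              else hgam P a)
    (fun a => if hdim P a == 1 then [set hgam P a] else hdel P a).

From mathcomp Require Import all_boot.
Set Implicit Arguments. Unset Strict Implicit. Unset Printing Implicit Defensive.

(* Interchanging gamma and delta on 1-faces reverses the generating relation
   of <^+ on S_0 and that of <^- on S_1, and leaves every other generating
   relation unchanged; since both relations preserve dimension, every <^+ and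
   <^- is either unchanged or reversed, so every perp^+ and perp^- is
   unchanged.  Globularity at a 2-face is the same pair of equations,
   interchanged, and the gamma- and delta-fibres over a 0-face are swapped.
   The only new requirement is |P_0 - gamma(P_1)| <= 1: a 0-face lying
   <^+-above another one is the target of a 1-face, and <^+ is linear on
   S_0. *)

Section TransitiveClosure.
Variable T : finType.
Implicit Types (e f : rel T) (p : pred T).

Lemma connect_sub_in e f p :
  (forall x y, p x -> e x y -> p y && f x y) ->
  forall a b, p a -> connect e a b -> connect f a b.
Proof.
move=> sub_e a b pa /connectP [s]; elim: s a pa => [|c s IHs] a pa /=.
  by move=> _ ->.
case/andP=> eac path_s last_s; have /andP[pc fac] := sub_e _ _ pa eac.
exact: connect_trans (connect1 fac) (IHs _ pc path_s last_s).
Qed.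

Lemma tclos_last e a b : tclos e a b = [exists c, connect e a c && e c b].
Proof.
apply/existsP/existsP => [[c /andP[eac /connectP[s path_s ->]]]|].
  have : path e a (rcons (belast c s) (last c s)) by rewrite -lastI /= eac.
  rewrite rcons_path => /andP[path_bs e_last].
  exists (last a (belast c s)); rewrite e_last andbT.
  by apply/connectP; exists (belast c s).
case=> c /andP[/connectP[s path_s ->{c}] ecb].
case: s path_s ecb => [_ /= eab|d s /= /andP[ead path_s] ecb].
  by exists b; rewrite eab connect0.
exists d; rewrite ead; apply/connectP; exists (rcons s b).
  by rewrite rcons_path path_s.
by rewrite last_rcons.
Qed.

Lemma tclos_rev e a b : tclos [rel x y | e y x] a b = tclos e b a.
Proof.
rewrite [RHS]tclos_last; apply: eq_existsb => c /=.
by rewrite andbC connect_rev.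
Qed.

Lemma eq_tclos_in e f p :
  (forall x y, e x y -> p x = p y) -> (forall x y, p x -> f x y = e x y) ->
  forall a b, p a -> tclos f a b = tclos e a b.
Proof.
move=> e_p fE.
have sub_e x y : p x -> e x y -> p y && f x y.
  by move=> px exy; rewrite -(e_p _ _ exy) px fE.
have sub_f x y : p x -> f x y -> p y && e x y.
  by move=> px; rewrite fE // => exy; rewrite -(e_p _ _ exy) px.
move=> a b pa; apply/existsP/existsP => -[c /andP[eac cb]]; exists c.
  have /andP[pc ->] := sub_f _ _ pa eac; exact: connect_sub_in sub_f _ _ pc cb.
have /andP[pc ->] := sub_e _ _ pa eac; exact: connect_sub_in sub_e _ _ pc cb.
Qed.

Lemma tclos_rev_if e f p :
  (forall x y, e x y -> p x = p y) ->
  (forall x y, f x y = if p x then e y x else e x y) ->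
  forall a b, tclos f a b = if p a then tclos e b a else tclos e a b.
Proof.
move=> e_p fE a b; case: ifP => pa.
  rewrite -[tclos e b a]tclos_rev; apply: (eq_tclos_in (p := p)) => // x y.
    by move=> /e_p.
  by move=> px; rewrite fE px.
apply: (eq_tclos_in (p := predC p)); rewrite /= ?pa // => x y.
  by move=> /e_p ->.
by move=> /negbTE px; rewrite fE px.
Qed.

End TransitiveClosure.

Section Hypergraph.
Variables (T : finType) (Q : hypergraph T).
Local Notation dim := (hdim Q).

Definition globular : Prop :=
  forall a, 2 <= dim a ->
    gamS Q [set hgam Q a] = gamS Q (hdel Q a) :\: delS Q (hdel Q a) /\
    delS Q [set hgam Q a] = delS Q (hdel Q a) :\: gamS Q (hdel Q a).

Definition target_fibres_linear : Prop :=
  forall x a b, dim a = (dim x).+1 -> dim b = (dim x).+1 ->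
    hgam Q a = x -> hgam Q b = x -> a != b -> upper_perp Q a b.

Definition source_fibres_linear : Prop :=
  forall x a b, dim a = (dim x).+1 -> dim b = (dim x).+1 ->
    x \in hdel Q a -> x \in hdel Q b -> a != b -> upper_perp Q a b.

Lemma upper_rel_dim a b : upper_rel Q a b -> dim a = dim b.
Proof. by case/andP => /eqP. Qed.

Lemma lower_rel_dim a b : lower_rel Q a b -> dim a = dim b.
Proof. by case/and3P => _ /eqP. Qed.

Lemma upper_lt_target a b : upper_lt Q a b -> b \in gamS Q (faces Q (dim b).+1).
Proof.
rewrite /upper_lt tclos_last => /existsP[c /andP[_ /andP[/eqP dim_cb]]].
case/existsP=> al /and3P[/eqP dim_al _ /eqP gam_al].
by apply/imsetP; exists al; rewrite // inE dim_al dim_cb.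
Qed.

Lemma card_dim0_notin_gamS :
  (forall a b, dim a = 0 -> dim b = 0 -> a != b -> upper_perp Q a b) ->
  #|faces Q 0 :\: gamS Q (faces Q 1)| <= 1.
Proof.
move=> upper_total; rewrite leqNgt; apply/card_gt1P => -[a [b [+ + ab]]].
rewrite !inE => /andP[a_src /eqP a0] /andP[b_src /eqP b0].
case/orP: (upper_total a b a0 b0 ab) => /upper_lt_target.
  by rewrite b0 (negbTE b_src).
by rewrite a0 (negbTE a_src).
Qed.

End Hypergraph.

Section Opposite.
Variables (T : finType) (P : hypergraph T).
Hypothesis P_pos : is_pos_hypergraph P.
Local Notation dim := (hdim P).
Local Notation Pop := (hop P).

Lemma hgam_op1 a x : dim a = 1 -> (hgam Pop a == x) = (x \in hdel P a).
Proof.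
move=> a1; have a_pos : 0 < dim a by rewrite a1.
have [_ _ _ /(_ a1)] := P_pos a_pos.
move/eqP/cards1P=> [y del_a]; rewrite /hop /= a1 eqxx del_a in_set1.
case: pickP => [z|/(_ y)]; last by rewrite in_set1 eqxx.
by rewrite in_set1 => /eqP -> /=; rewrite eq_sym.
Qed.

Lemma hgam_op a : dim a != 1 -> hgam Pop a = hgam P a.
Proof. by rewrite /hop /= => /negbTE ->. Qed.

Lemma hdel_op a : dim a != 1 -> hdel Pop a = hdel P a.
Proof. by rewrite /hop /= => /negbTE ->. Qed.

Lemma hdel_op1 a : dim a = 1 -> hdel Pop a = [set hgam P a].
Proof. by rewrite /hop /= => ->. Qed.

Lemma gamS_op1 (X : {set T}) :
  {in X, forall a, dim a = 1} -> gamS Pop X = delS P X.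
Proof.
move=> X1; apply/setP => y; apply/imsetP/bigcupP => -[a aX].
  by move->; exists a; rewrite // -hgam_op1 ?X1.
by move=> y_a; exists a => //; apply/esym/eqP; rewrite hgam_op1 ?X1.
Qed.

Lemma delS_op1 (X : {set T}) :
  {in X, forall a, dim a = 1} -> delS Pop X = gamS P X.
Proof.
move=> X1; apply/setP => y; apply/bigcupP/imsetP => -[a aX].
  by rewrite hdel_op1 ?X1 // => /set1P ->; exists a.
by move->; exists a; rewrite // hdel_op1 ?X1 ?set11.
Qed.

Lemma gamS_op (X : {set T}) :
  {in X, forall a, dim a != 1} -> gamS Pop X = gamS P X.
Proof. by move=> Xn1; apply: eq_in_imset => a /Xn1 /hgam_op. Qed.

Lemma delS_op (X : {set T}) :
  {in X, forall a, dim a != 1} -> delS Pop X = delS P X.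
Proof. by move=> Xn1; apply: eq_bigr => a /Xn1 /hdel_op. Qed.

Lemma upper_rel_op a b :
  upper_rel Pop a b = if dim a == 0 then upper_rel P b a else upper_rel P a b.
Proof.
rewrite /upper_rel; change (hdim Pop) with dim.
have [ab|_] := eqVneq (dim a) (dim b); last by case: ifP.
rewrite -ab !andTb; case: ifP => [/eqP a0|a_ne0]; apply: eq_existsb => al.
  rewrite a0; have [al1|] := eqVneq (dim al) 1; last by [].
  by rewrite !andTb hdel_op1 // in_set1 hgam_op1 // andbC eq_sym.
have [al_a|] := eqVneq (dim al) (dim a).+1; last by [].
by rewrite hdel_op ?hgam_op // al_a eqSS a_ne0.
Qed.

Lemma lower_rel_op a b :
  lower_rel Pop a b = if dim a == 1 then lower_rel P b a else lower_rel P a b.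
Proof.
rewrite /lower_rel; change (hdim Pop) with dim.
have [ab|_] := eqVneq (dim a) (dim b); last by case: ifP; rewrite !andbF.
rewrite -ab; case: ifP => [/eqP a1|a_ne1].
  by rewrite hdel_op1 -?ab // in_set1 hgam_op1.
by rewrite hdel_op ?hgam_op -?ab ?a_ne1.
Qed.

Lemma upper_lt_op a b :
  upper_lt Pop a b = if dim a == 0 then upper_lt P b a else upper_lt P a b.
Proof.
apply: (tclos_rev_if (p := fun x => dim x == 0)) upper_rel_op a b.
by move=> x y /upper_rel_dim ->.
Qed.

Lemma lower_lt_op a b :
  lower_lt Pop a b = if dim a == 1 then lower_lt P b a else lower_lt P a b.
Proof.
apply: (tclos_rev_if (p := fun x => dim x == 1)) lower_rel_op a b.
by move=> x y /lower_rel_dim ->.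
Qed.

Lemma upper_perp_op a b :
  dim a = dim b -> upper_perp Pop a b = upper_perp P a b.
Proof.
by move=> ab; rewrite /upper_perp !upper_lt_op -ab; case: ifP; rewrite // orbC.
Qed.

Lemma lower_perp_op a b :
  dim a = dim b -> lower_perp Pop a b = lower_perp P a b.
Proof.
by move=> ab; rewrite /lower_perp !lower_lt_op -ab; case: ifP; rewrite // orbC.
Qed.

Lemma pos_hypergraph_op : is_pos_hypergraph Pop.
Proof.
move=> a; change (hdim Pop) with dim => a_pos.
have [a1|a_ne1] := eqVneq (dim a) 1; last first.
  by rewrite hgam_op ?hdel_op //; apply: P_pos.
have [gam_dim _ del_dim _] := P_pos a_pos.
have gam_a : hgam Pop a \in hdel P a by rewrite -hgam_op1.
rewrite hdel_op1 //; split=> [|||_]; first exact: del_dim.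
- by apply/set0Pn; exists (hgam P a); rewrite set11.
- by move=> b /set1P ->; apply: gam_dim.
- by rewrite cards1.
Qed.

Lemma globular_op : globular P -> globular Pop.
Proof.
move=> globP a; change (hdim Pop) with dim => a_ge2.
have [gam_dim _ del_dim _] := P_pos (ltnW a_ge2).
have a_ne1 : dim a != 1 by case: (dim a) a_ge2 => [|[]].
rewrite hgam_op ?hdel_op //; have [a2|a_ne2] := eqVneq (dim a) 2.
  have gam1 : {in [set hgam P a], forall b, dim b = 1}.
    by move=> b /set1P ->; rewrite gam_dim a2.
  have del1 : {in hdel P a, forall b, dim b = 1}.
    by move=> b /del_dim ->; rewrite a2.
  by rewrite !gamS_op1 ?delS_op1 //; have [-> ->] := globP a a_ge2.
have dim_ne1 : (dim a).-1 != 1 by case: (dim a) a_ge2 a_ne2 => [|[|[|]]].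
have gam_ne1 : {in [set hgam P a], forall b, dim b != 1}.
  by move=> b /set1P ->; rewrite gam_dim.
have del_ne1 : {in hdel P a, forall b, dim b != 1} by move=> b /del_dim ->.
by rewrite !gamS_op ?delS_op //; apply: globP.
Qed.

Lemma target_fibres_linear_op :
  target_fibres_linear P -> source_fibres_linear P -> target_fibres_linear Pop.
Proof.
move=> tgtP srcP x a b; change (hdim Pop) with dim => ax bx gam_a gam_b ab.
rewrite upper_perp_op ?ax ?bx //; have [x0|x_ne0] := eqVneq (dim x) 0.
  by apply: (srcP x) => //; rewrite -hgam_op1 ?ax ?bx ?x0 ?gam_a ?gam_b.
by apply: (tgtP x); rewrite // -hgam_op ?ax ?bx ?eqSS.
Qed.

Lemma source_fibres_linear_op :
  target_fibres_linear P -> source_fibres_linear P -> source_fibres_linear Pop.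
Proof.
move=> tgtP srcP x a b; change (hdim Pop) with dim => ax bx x_a x_b ab.
rewrite upper_perp_op ?ax ?bx //; have [x0|x_ne0] := eqVneq (dim x) 0.
  move: x_a x_b; rewrite !hdel_op1 ?ax ?bx ?x0 // => /set1P gam_a /set1P gam_b.
  exact: (tgtP x).
by apply: (srcP x); rewrite // -hdel_op ?ax ?bx ?eqSS.
Qed.

Lemma card_notin_delS_op :
  (forall m, #|faces P m :\: delS P (faces P m.+1)| <= 1) ->
  (forall a b, dim a = 0 -> dim b = 0 -> a != b -> upper_perp P a b) ->
  forall m, #|faces Pop m :\: delS Pop (faces Pop m.+1)| <= 1.
Proof.
move=> cardP upper_total [|m].
  by rewrite delS_op1; [exact: card_dim0_notin_gamS | move=> a /[!inE] /eqP].
by rewrite delS_op; [exact: cardP | move=> a /[!inE] /eqP ->].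
Qed.

End Opposite.

Theorem mainTheorem9 (T : finType) (P : hypergraph T) :
  is_pos_opetope P -> is_pos_opetope (hop P).
Proof.
move=> [[[P_pos S0 globP upper_irr upper_total] [perp_disj tgtP srcP]] cardP].
split; [split; split|].
- exact: pos_hypergraph_op.
- exact: S0.
- exact: globular_op.
- by move=> a; rewrite (upper_lt_op P_pos) if_same; apply: upper_irr.
- by move=> a b a0 b0 ab; rewrite upper_perp_op ?a0 ?b0 //; apply: upper_total.
- move=> a b a_pos ab; rewrite upper_perp_op ?lower_perp_op //.
  exact: perp_disj.
- exact: target_fibres_linear_op.
- exact: source_fibres_linear_op.
- exact: card_notin_delS_op.
Qed.
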